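(* Let $R$ be a $\sigma$-(sps) Armendariz ring, where $\sigma$ is an endomorphism of $R$. Let $f=\sum_{i=0}^\infty a_ix^i$, $g=\sum_{j=0}^\infty b_jx^j$, $h=\sum_{k=0}^\infty c_kx^k\in R[[x;\sigma]]$. If $fgh=0$, then $a_ib_jc_k=0$ for all $i,j,k\ge 0$.
   Context: All rings are associative with identity; $\sigma$ denotes a nonzero, non-identity ring endomorphism of $R$. The skew power series ring $R[[x;\sigma]]$ consists of all formal series $\sum_{i=0}^\infty a_i x^i$ with $a_i\in R$, added termwise and multiplied using distributivity and the rule $xa=\sigma(a)x$ for $a\in R$. A ring $R$ is $\sigma$-(sps) Armendariz if whenever $p=\sum_{i=0}^\infty a_ix^i$ and $q=\sum_{j=0}^\infty b_jx^j$ in $R[[x;\sigma]]$ satisfy $pq=0$, then $a_ib_j=0$ for all $i,j$. *)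

From HB Require Import structures.
From mathcomp Require Import all_boot all_order all_algebra.
Set Implicit Arguments. Unset Strict Implicit. Unset Printing Implicit Defensive.
Import GRing.Theory.
Local Open Scope ring_scope.

(* A skew power series sum_i a_i x^i in R[[x;sigma]] is represented by its
   coefficient sequence i |-> a_i. *)
Definition sps (R : nzRingType) := nat -> R.

(* Multiplication in R[[x;sigma]]: using x a = sigma(a) x, hence
   (a_i x^i)(b_j x^j) = a_i sigma^i(b_j) x^(i+j), so the n-th coefficient of
   p q is sum_{i=0}^n a_i sigma^i(b_(n-i)). *)
Definition spmul (R : nzRingType) (s : R -> R) (p q : sps R) : sps R :=
  fun n => \sum_(i < n.+1) p i * iter i s (q (n - i)%N).

Definition sps_zero (R : nzRingType) (p : sps R) : Prop := forall n, p n = 0.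

Definition sps_armendariz (R : nzRingType) (s : {rmorphism R -> R}) : Prop :=
  forall p q : sps R, sps_zero (spmul s p q) -> forall i j, p i * q j = 0.

From HB Require Import structures.
From mathcomp Require Import all_boot all_order all_algebra.
Import GRing.Theory.
Local Open Scope ring_scope.

(* The multiplication [spmul s] of R[[x;s]] is associative: both (fg)h and
   f(gh) have n-th coefficient sum_{l+m+r=n} f_l s^l(g_m) s^(l+m)(h_r).  This
   is checked coefficientwise by exchanging the two finite sums, using that
   the iterates s^k are ring morphisms.  Hence fgh = 0 means f(gh) = 0, and
   the Armendariz property gives f_i (gh)_n = 0 for all i, n.  Since left
   multiplication by the scalar f_i commutes with [spmul s] in the left
   factor, (f_i g) h = f_i (gh) = 0, where f_i g is the series m |-> f_i g_m;
   a second application of the Armendariz property yields f_i g_j h_k = 0. *)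

Section IteratedMorphism.
Variables (R : nzRingType) (s : {rmorphism R -> R}) (k : nat).

Lemma iter_rmorphM (x y : R) : iter k s (x * y) = iter k s x * iter k s y.
Proof. by elim: k => //= k' IH; rewrite IH rmorphM. Qed.

Lemma iter_rmorph_sum (m : nat) (F : 'I_m -> R) :
  iter k s (\sum_(i < m) F i) = \sum_(i < m) iter k s (F i).
Proof. by elim: k => //= k' IH; rewrite IH rmorph_sum. Qed.

End IteratedMorphism.

Lemma big_ord_tail (V : nmodType) (F : nat -> V) (l n : nat) : (l <= n)%N ->
  \sum_(i < n.+1 | (l <= i)%N) F i = \sum_(m < (n - l).+1) F (m + l)%N.
Proof.
move=> le_ln.
rewrite -(big_geq_mkord l n.+1 xpredT F) -{1}(add0n l) big_addn big_mkord.
by rewrite subSn.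
Qed.

Section SkewPowerSeries.
Variables (R : nzRingType) (s : {rmorphism R -> R}).

Lemma spmulA (p q r : sps R) (n : nat) :
  spmul s (spmul s p q) r n = spmul s p (spmul s q r) n.
Proof.
rewrite /spmul.
pose F (l i : nat) := p l * iter l s (q (i - l)%N) * iter i s (r (n - i)%N).
have expand_lhs : forall i : 'I_n.+1,
    (\sum_(l < i.+1) p l * iter l s (q (i - l)%N)) * iter i s (r (n - i)%N) =
    \sum_(l < n.+1 | (l <= i)%N) F l i.
  by move=> i; rewrite mulr_suml (big_ord_widen n.+1 (F^~ i) (ltn_ord i)).
rewrite (eq_bigr _ (fun i _ => expand_lhs i)) /=.
(* Make l the outer index, then reindex the inner sum by m = i - l. *)
rewrite (exchange_big_dep xpredT) //=.
apply: eq_bigr => l _.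
rewrite iter_rmorph_sum mulr_sumr (big_ord_tail _ (F l)); last by rewrite -ltnS.
apply: eq_bigr => m _.
by rewrite /F iter_rmorphM mulrA addnK -iterD addnC subnDA.
Qed.

Lemma sps_zero_spmulA (p q r : sps R) :
  sps_zero (spmul s (spmul s p q) r) -> sps_zero (spmul s p (spmul s q r)).
Proof. by move=> pq_r0 n; rewrite -spmulA. Qed.

Lemma spmul_scalel (a : R) (p q : sps R) (n : nat) :
  spmul s (fun m => a * p m) q n = a * spmul s p q n.
Proof. by rewrite /spmul mulr_sumr; apply: eq_bigr => l _; rewrite mulrA. Qed.

End SkewPowerSeries.

Arguments sps_zero_spmulA {R s p q r}.

Theorem lemma2p4 (R : nzRingType) (s : {rmorphism R -> R})
  (s_nonzero : exists r : R, s r <> 0)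
  (s_nonid : exists r : R, s r <> r)
  (HA : sps_armendariz s) (f g h : sps R) :
  sps_zero (spmul s (spmul s f g) h) ->
  forall i j k : nat, f i * g j * h k = 0.
Proof.
move=> fg_h0 i j k.
have fi_gh0 := HA _ _ (sps_zero_spmulA fg_h0) i.
have fig_h0 : sps_zero (spmul s (fun m => f i * g m) h).
  by move=> n; rewrite spmul_scalel fi_gh0.
exact: HA _ _ fig_h0 j k.
Qed.
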